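(* Let $q$ be a power of a prime $p$, $r$ a prime, $\mathbb{F}=\mathbb{F}_q$, $\mathbb{E}=\mathbb{F}_{q^r}$, and let $V$ be an irreducible $\mathbb{F}\,\Gamma\mathrm{L}(1,\mathbb{E}/\mathbb{F})$-module. Then $\dim_{\mathbb{F}}V$ equals $r$ or divides $r-1$. In particular, the maximum dimension of an irreducible $\Gamma\mathrm{L}(1,\mathbb{E}/\mathbb{F})$-module over $\mathbb{F}$ is $r$.
   Context: $\Gamma\mathrm{L}(1,\mathbb{E}/\mathbb{F})$ is the group of $\mathbb{F}$-linear maps of $\mathbb{E}$ of the form $x\mapsto \lambda x^{\sigma}$ with $\lambda\in\mathbb{E}^\times$, $\sigma\in\mathrm{Gal}(\mathbb{E}/\mathbb{F})$; it is isomorphic to $\langle\phi,\mu\mid \phi^r=\mu^{q^r-1}=1,\ \mu^\phi=\mu^q\rangle$. *)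

From HB Require Import structures.
From mathcomp Require Import all_boot all_order all_algebra all_fingroup all_solvable all_field all_character.
Set Implicit Arguments. Unset Strict Implicit. Unset Printing Implicit Defensive.
Import GRing.Theory.
Local Open Scope ring_scope.

(* Gamma L(1, E/F) for E = F_{q^r} and F = F_q (the subfield of E of order q),
   realised as a set of permutations of E: the F-linear maps x |-> l * x^sigma
   with l in E^x and sigma in Gal(E/F) = { x |-> x^(q^i) | i < r }. *)
Definition GammaL1 (E : finFieldType) (q r : nat) : {set {perm E}} :=
  [set s : {perm E} | [exists l : E, exists i : 'I_r,
      (l != 0) && [forall x : E, s x == l * x ^+ (q ^ i)]]].

From HB Require Import structures.
From mathcomp Require Import all_boot all_order all_algebra all_fingroup all_solvable all_field all_character.
From mathcomp Require Import zify.

(* Let [A] and [B] represent [mu : x |-> w x], for a generator [w] of the units of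
   E, and the Frobenius [phi : x |-> x ^ q]; they generate the image of the group
   and satisfy [A ^ (q ^ r) = A], [B ^ r = 1] and [A B = B A ^ q].  Hence
   [B f(A) = f(A) ^ (q ^ (r - 1)) B], so the kernel of any [f(A)] is a submodule,
   and on an irreducible module the minimal polynomial of [A] is irreducible.  As
   it divides ['X ^ (q ^ r) - 'X], its degree is 1 or r.
   In degree 1, [A] is scalar and the module is irreducible for the cyclic group
   generated by [B], so its dimension divides [r - 1].  In degree r, the
   Frobenius conjugates of a root are distinct, and a Vandermonde argument shows
   [1 + B + ... + B ^ (r - 1) != 0]; any nonzero row [u] of this matrix is fixed
   by [B], so the cyclic [A]-subspace of [u], of dimension at most r, is a
   submodule.
   If no irreducible module had dimension r, [A] would be a scalar in [F] on all
   of them, so [mu ^ (q - 1)] would act unipotently on every module, in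
   particular on the faithful regular module; but [mu] has order [q ^ r - 1],
   which does not divide [(q - 1) p ^ k] for any [k]. *)

Set Implicit Arguments. Unset Strict Implicit. Unset Printing Implicit Defensive.
Import GRing.Theory.
Local Open Scope ring_scope.

Lemma expr_sum_pchar (R : comNzRingType) e (I : Type) (s : seq I) (P : pred I)
    (f : I -> R) :
  [pchar R].-nat e -> (\sum_(i <- s | P i) f i) ^+ e = \sum_(i <- s | P i) f i ^+ e.
Proof.
move=> pchar_e; apply: (big_morph (fun x => x ^+ e)); first by move=> x y; rewrite exprDn_pchar.
by rewrite expr0n; case: e pchar_e.
Qed.

Lemma horner_exp_pchar (R : comNzRingType) e (f : {poly R}) x :
  [pchar R].-nat e -> (forall i, f`_i ^+ e = f`_i) -> f.[x] ^+ e = f.[x ^+ e].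
Proof.
move=> pchar_e f_fixed; rewrite !horner_coef expr_sum_pchar //; apply: eq_bigr => i _.
by rewrite exprMn f_fixed -!exprM mulnC.
Qed.

Lemma horner_mx_exp_pchar (R : comNzRingType) e n (M : 'M[R]_n.+1) (f : {poly R}) :
  [pchar R].-nat e -> (forall i, f`_i ^+ e = f`_i) -> horner_mx M f ^+ e = horner_mx (M ^+ e) f.
Proof.
move=> pchar_e f_fixed; have fE : f = \sum_(i < size f) f`_i *: 'X^i.
  by rewrite -poly_def coefK.
have pchar_poly_e : [pchar {poly R}].-nat e.
  by apply: sub_in_pnat pchar_e => x _; rewrite pchar_poly.
rewrite -rmorphXn /= [in LHS]fE [in RHS]fE expr_sum_pchar // !rmorph_sum.
apply: eq_bigr => i _; rewrite exprZn f_fixed -exprM mulnC exprM.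
by rewrite -!mul_polyC !rmorphM !rmorphXn /= !horner_mx_C !horner_mx_X.
Qed.

Section FiniteFieldFrobenius.
Variable F : finFieldType.
Local Notation q := #|F|.

Lemma pchar_nat_card : [pchar F].-nat q.
Proof.
have [p p_pr pcharFp] := finPcharP F.
have := pprimeChar_pgroup pcharFp; rewrite /pgroup cardsT.
by apply: sub_in_pnat => _ _ /eqnP ->.
Qed.

Lemma pchar_nat_card_expn t : [pchar F].-nat (q ^ t)%N.
Proof. by rewrite pnatX pchar_nat_card. Qed.

Lemma expf_card_expn (c : F) t : c ^+ (q ^ t) = c.
Proof.
elim: t => [|t IH]; first by rewrite expr1.
by rewrite expnSr exprM IH expf_card.
Qed.

Section QuotientField.
Variables (h : {poly F}) (hI : monic_irreducible_poly h).
Local Notation L := {poly %/ h with hI}.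
Local Notation d := (size h).-1.

Lemma deg_irr_gt0 : (0 < d)%N.
Proof. by case: hI => [[h_gt1 _] _]; rewrite -ltnS prednK // ltnW. Qed.

Lemma expf_qfpoly_card_expn (y : L) a b : y ^+ (q ^ (a * d + b)) = y ^+ (q ^ b).
Proof.
elim: a => [|a IH]; first by rewrite mul0n add0n.
by rewrite mulSn -addnA expnD exprM -card_qfpoly expf_card IH.
Qed.

Lemma expf_qfpoly_inj t : injective (fun y : L => y ^+ (q ^ t)).
Proof.
move=> y z /= yz_t.
have expK (w : L) : (w ^+ (q ^ t)) ^+ (q ^ (t * d - t)) = w.
  rewrite -exprM -expnD subnKC; last by rewrite leq_pmulr ?deg_irr_gt0.
  by rewrite -[(t * d)%N]addn0 expf_qfpoly_card_expn expr1.
by rewrite -(expK y) -(expK z) yz_t.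
Qed.

(* 'qX generates L over F, and [y |-> y ^+ (q ^ t)] is a ring morphism fixing F. *)
Lemma expf_qX_fixed (y : L) t : 'qX ^+ (q ^ t) = 'qX :> L -> y ^+ (q ^ t) = y.
Proof.
move=> qX_fixed.
have yE : y = (map_poly (qpolyC h) (val y)).[ 'qX ].
  rewrite -in_qpoly_comp_horner comp_polyXr; apply: val_inj => /=.
  by rewrite Pdiv.Ring.rmodp_small // size_mk_monic.
rewrite [in LHS]yE horner_exp_pchar.
- by rewrite qX_fixed -yE.
- by apply: sub_in_pnat (pchar_nat_card_expn t) => x _; rewrite pchar_qpoly.
- by move=> i; rewrite coef_map /= -rmorphXn /= expf_card_expn.
Qed.

(* All [q ^ d] elements of L are roots of ['X^(q ^ t) - 'X]. *)
Lemma deg_irr_le_fixed t : (0 < t)%N -> (forall y : L, y ^+ (q ^ t) = y) -> (d <= t)%N.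
Proof.
move=> t_gt0 fixed.
have q_gt1 : (1 < q)%N by apply: finNzRing_gt1.
have qt_gt1 : (1 < q ^ t)%N by rewrite -(expn0 q) ltn_exp2l.
pose P : {poly L} := 'X^(q ^ t) - 'X.
have sizeP : size P = (q ^ t).+1.
  by rewrite /P size_polyDl ?size_polyXn // size_polyN size_polyX ltnS.
have P_neq0 : P != 0 by rewrite -size_poly_eq0 sizeP.
have := max_poly_roots P_neq0 (_ : all (root P) (enum L)) (enum_uniq L).
rewrite -cardE card_qfpoly sizeP ltnS leq_exp2l //; apply.
by apply/allP => y _; rewrite /root /P !hornerE fixed subrr.
Qed.

Lemma deg_irr_dvdn m : h %| 'X^(q ^ m) - 'X -> (d %| m)%N.
Proof.
move=> /dvdpP [c XqXE].
have qX_fixed : 'qX ^+ (q ^ m) = 'qX :> L.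
  apply/eqP; rewrite -subr_eq0; apply/eqP.
  rewrite -rmorphXn /= -rmorphB /=; apply: val_inj => /=.
  have h_monic : h \is monic by case: hI.
  by rewrite XqXE (mk_monicE hI) (Pdiv.RingMonic.rmodp_mull h_monic).
rewrite {1}(divn_eq m d) in qX_fixed.
have fixed (y : L) : y ^+ (q ^ (m %% d)) = y.
  by have := expf_qX_fixed y qX_fixed; rewrite expf_qfpoly_card_expn.
have [mod0|mod_gt0] := posnP (m %% d); first by rewrite /dvdn mod0.
by move: (deg_irr_le_fixed mod_gt0 fixed); rewrite leqNgt ltn_pmod // deg_irr_gt0.
Qed.

Lemma qX_expn_inj i j : (i < d)%N -> (j < d)%N ->
  'qX ^+ (q ^ i) = 'qX ^+ (q ^ j) :> L -> i = j.
Proof.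
wlog le_ij : i j / (i <= j)%N.
  move=> W i_lt j_lt eq_ij; case: (leqP i j) => [le_ij | lt_ji]; first exact: W.
  by apply/esym/W => //; apply: ltnW.
move=> _ j_lt eq_ij; apply/eqP; rewrite eqn_leq le_ij /= leqNgt; apply/negP => ij_lt.
have ji_gt0 : (0 < j - i)%N by rewrite subn_gt0.
have : 'qX ^+ (q ^ (j - i)) = 'qX :> L.
  by apply: (@expf_qfpoly_inj i); rewrite /= -exprM -expnD subnK ?(ltnW ij_lt).
move=> qX_fixed; have := deg_irr_le_fixed ji_gt0 (fun y => expf_qX_fixed y qX_fixed).
by rewrite leqNgt (leq_ltn_trans (leq_subr _ _) j_lt).
Qed.

End QuotientField.
End FiniteFieldFrobenius.

Section MatrixPolynomials.
Variables (F : fieldType) (n' : nat).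
Local Notation n := n'.+1.
Implicit Types (M N X : 'M[F]_n) (v : 'rV[F]_n).

Lemma degree_mxminpoly_le M : (degree_mxminpoly M <= n)%N.
Proof.
have := dvdp_leq (monic_neq0 (char_poly_monic M)) (mxminpoly_dvd_char M).
by rewrite size_mxminpoly size_char_poly.
Qed.

Lemma horner_mx_modp M f : horner_mx M (f %% mxminpoly M) = horner_mx M f.
Proof. by rewrite -horner_mxK mx_inv_hornerK // horner_mx_mem. Qed.

Lemma stablemx_ker_horner_mx M f : stablemx (kermx (horner_mx M f)) M.
Proof. exact/comm_mx_stable_ker/comm_horner_mx. Qed.

Lemma stablemx_ker_mulX M N e : M *m N = N ^+ e.+1 *m M -> stablemx (kermx N) M.
Proof.
move=> MN; apply/sub_kermxP; rewrite -mulmxA MN exprS -mulmxE !mulmxA.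
by rewrite mulmx_ker !mul0mx.
Qed.

Lemma mxminpoly_irreducible M :
  (forall f, kermx (horner_mx M f) != 0 -> horner_mx M f = 0) ->
  irreducible_poly (mxminpoly M).
Proof.
move=> ker_eq0; split; first by rewrite size_mxminpoly ltnS mxminpoly_nonconstant.
move=> g size_g g_dvd.
have m_neq0 : mxminpoly M != 0 by apply/monic_neq0/mxminpoly_monic.
have /dvdpP [c mE] := g_dvd.
have c_neq0 : c != 0 by apply: contraNneq m_neq0 => c0; rewrite mE c0 mul0r.
have g_neq0 : g != 0 by apply: contraNneq m_neq0 => g0; rewrite mE g0 mulr0.
suff gM0 : horner_mx M g = 0 by rewrite /eqp g_dvd mxminpoly_min.
apply: ker_eq0; rewrite kermx_eq0 row_free_unit; apply/negP => gM_unit.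
have /mxminpoly_min/(dvdp_leq c_neq0) : horner_mx M c = 0.
  have := mx_root_minpoly M; rewrite mE rmorphM /= => cg0.
  by rewrite -(mulrK gM_unit (horner_mx M c)) cg0 mul0r.
have size_g_gt1 : (1 < size g)%N.
  by rewrite ltn_neqAle eq_sym size_g lt0n size_poly_eq0 g_neq0.
rewrite mE size_mul //; move: size_g_gt1; case: (size g) => [|[|s]] //= _.
by rewrite addnS /= -[X in (_ <= X)%N]addn0 leq_add2l.
Qed.

Definition krylov_mx M v : 'M_(degree_mxminpoly M, n) :=
  \matrix_(i < degree_mxminpoly M) (v *m M ^+ i).

Lemma krylov_horner_mx M v f : (v *m horner_mx M f <= krylov_mx M v)%MS.
Proof.
set g := f %% mxminpoly M.
have gE : g = \sum_(i < degree_mxminpoly M) g`_i *: 'X^i.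
  rewrite -poly_def; apply/polyP => i; rewrite coef_poly.
  case: ltnP => // d_le_i.
  by rewrite nth_default // (leq_trans (size_mod_mxminpoly M f) d_le_i).
rewrite -horner_mx_modp -/g gE rmorph_sum mulmx_sumr; apply: summx_sub => i _.
rewrite -mul_polyC rmorphM rmorphXn /= horner_mx_C horner_mx_X.
rewrite -mulmxE mul_scalar_mx -scalemxAr scalemx_sub //.
by rewrite -(rowK (fun i => v *m M ^+ i) i) row_sub.
Qed.

Lemma krylov_mx_neq0 M v : v != 0 -> krylov_mx M v != 0.
Proof.
apply: contraNneq => kM0; have := krylov_horner_mx M v 1.
by rewrite rmorph1 mulmx1 kM0 => /submx0null ->.
Qed.

Lemma stablemx_krylov M v X :
  (forall i, (v *m M ^+ i *m X <= krylov_mx M v)%MS) -> stablemx (krylov_mx M v) X.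
Proof. by move=> sub_kM; apply/row_subP => i; rewrite row_mul rowK. Qed.

Lemma stablemx_krylov_self M v : stablemx (krylov_mx M v) M.
Proof.
apply: stablemx_krylov => i; have := krylov_horner_mx M v 'X^(i.+1).
by rewrite rmorphXn /= horner_mx_X exprSr -mulmxE mulmxA.
Qed.

End MatrixPolynomials.

Section SemilinearPair.
Variables (F : finFieldType) (r : nat) (n' : nat) (A B : 'M[F]_n'.+1).
Local Notation q := #|F|.
Local Notation n := n'.+1.
Hypotheses (r_prime : prime r) (A_fixed : A ^+ (q ^ r) = A) (B_order : B ^+ r = 1)
  (AB_semilinear : A * B = B * A ^+ q).
Hypothesis AB_irreducible : forall m (U : 'M[F]_(m, n)),
  stablemx U A -> stablemx U B -> U != 0 -> row_full U.

Lemma exprA_mulB k : A ^+ k * B = B * A ^+ (k * q).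
Proof.
elim: k => [|k IH]; first by rewrite !expr0 mul1r mulr1.
by rewrite exprS -mulrA IH mulrA AB_semilinear -mulrA -exprD mulSn.
Qed.

Lemma exprA_mulBX k i : A ^+ k * B ^+ i = B ^+ i * A ^+ (k * q ^ i).
Proof.
elim: i => [|i IH]; first by rewrite !expr0 mul1r mulr1 muln1.
by rewrite exprSr mulrA IH -mulrA exprA_mulB mulrA -exprSr expnSr mulnA.
Qed.

Lemma horner_mxA_mulB f : horner_mx A f * B = B * horner_mx (A ^+ q) f.
Proof.
elim/poly_ind: f => [|f c IH]; first by rewrite !rmorph0 mul0r mulr0.
rewrite !rmorphD !rmorphM /= !horner_mx_X !horner_mx_C mulrDl mulrDr.
rewrite -mulrA AB_semilinear mulrA IH -mulrA; congr (_ + _).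
by rewrite -!mulmxE scalar_mxC.
Qed.

(* [f(A ^+ q) = f(A) ^+ q] as [f] has coefficients in [F], and [A ^+ (q ^ r) = A]. *)
Lemma mulB_horner_mxA f : B * horner_mx A f = horner_mx A f ^+ (q ^ r.-1) * B.
Proof.
rewrite -rmorphXn horner_mxA_mulB rmorphXn horner_mx_exp_pchar.
- by rewrite -exprM -expnS prednK ?prime_gt0 // A_fixed.
- exact: pchar_nat_card_expn.
- by move=> i; apply: expf_card_expn.
Qed.

Lemma horner_mxA_ker_eq0 f : kermx (horner_mx A f) != 0 -> horner_mx A f = 0.
Proof.
have [e qE] : exists e, (q ^ r.-1)%N = e.+1.
  by exists (q ^ r.-1).-1; rewrite prednK // expn_gt0 (ltnW (finNzRing_gt1 F)).
move=> /(AB_irreducible (stablemx_ker_horner_mx _ _)) full_ker.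
have /full_ker : stablemx (kermx (horner_mx A f)) B.
  by apply: (@stablemx_ker_mulX _ _ _ _ e); rewrite mulmxE -qE mulB_horner_mxA.
by rewrite -sub1mx => /sub_kermxP; rewrite mul1mx.
Qed.

Lemma mxminpolyA_mi : monic_irreducible_poly (mxminpoly A).
Proof. by split; [apply/mxminpoly_irreducible/horner_mxA_ker_eq0 | apply: mxminpoly_monic]. Qed.

Lemma degree_mxminpolyA_dvd : (degree_mxminpoly A %| r)%N.
Proof.
have := deg_irr_dvdn mxminpolyA_mi (m := r); rewrite size_mxminpoly; apply.
by apply: mxminpoly_min; rewrite rmorphB rmorphXn /= horner_mx_X A_fixed subrr.
Qed.

Section FullDegree.
Local Notation mA := (mxminpoly A).
Local Notation L := {poly %/ mA with mxminpolyA_mi}.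
Hypothesis degA : degree_mxminpoly A = r.

Definition horner_qfpoly (y : L) : 'M[F]_n := horner_mx A (val y).

Lemma horner_qfpoly_in f : horner_qfpoly (in_qpoly mA f) = horner_mx A f.
Proof.
rewrite /horner_qfpoly /= (mk_monicE mxminpolyA_mi).
rewrite [in RHS](Pdiv.RingMonic.rdivp_eq (mxminpoly_monic A) f).
by rewrite rmorphD rmorphM /= mx_root_minpoly mulr0 add0r.
Qed.

Lemma in_qpoly_val (y : L) : y = in_qpoly mA (val y).
Proof. by apply: val_inj => /=; rewrite Pdiv.Ring.rmodp_small // size_mk_monic. Qed.

Fact horner_qfpoly_is_zmod_morphism : zmod_morphism horner_qfpoly.
Proof. by move=> y z; rewrite /horner_qfpoly -rmorphB. Qed.

Fact horner_qfpoly_is_monoid_morphism : monoid_morphism horner_qfpoly.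
Proof.
split; first by rewrite -in_qpoly1 horner_qfpoly_in rmorph1.
by move=> y z; rewrite [y]in_qpoly_val [z]in_qpoly_val -in_qpolyM !horner_qfpoly_in rmorphM.
Qed.

HB.instance Definition _ :=
  GRing.isZmodMorphism.Build L 'M[F]_n horner_qfpoly horner_qfpoly_is_zmod_morphism.
HB.instance Definition _ :=
  GRing.isMonoidMorphism.Build L 'M[F]_n horner_qfpoly horner_qfpoly_is_monoid_morphism.

Lemma horner_qfpoly_qX : horner_qfpoly 'qX = A.
Proof. by rewrite horner_qfpoly_in horner_mx_X. Qed.

Lemma horner_qfpoly_commA (y : L) k : horner_qfpoly y * A ^+ k = A ^+ k * horner_qfpoly y.
Proof. by rewrite -horner_qfpoly_qX -rmorphXn -!rmorphM mulrC. Qed.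

(* The conjugates [x_i = 'qX ^+ (q ^ i)], [i < r], are distinct, so their Vandermonde
   matrix is invertible; if [c] is the first row of its inverse, then
   [1 = sum_i B ^+ i * (sum_k c_k x_i ^+ k)] evaluated at [A], and commuting [A]
   past [B] turns this into [sum_k A ^+ k * (sum_i B ^+ i) * c_k]. *)
Lemma sum_exprB_neq0 : \sum_(i < r) B ^+ i != 0.
Proof.
pose x : 'rV[L]_r := \row_(i < r) 'qX ^+ (q ^ i).
pose V := Vandermonde r x.
have V_unit : V \in unitmx.
  rewrite unitmxE det_Vandermonde unitfE.
  apply/prodf_neq0 => i _; apply/prodf_neq0 => j ij; rewrite subr_eq0 !mxE.
  apply/eqP => /qX_expn_inj; rewrite size_mxminpoly /= degA.
  by move=> /(_ (ltn_ord j) (ltn_ord i)) ji; move: ij; rewrite ji ltnn.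
pose i0 : 'I_r := Ordinal (prime_gt0 r_prime).
pose c k := invmx V i0 k.
have cE i : \sum_k c k * x 0 i ^+ k = (i0 == i)%:R.
  have := congr1 (fun M : 'M[L]_r => M i0 i) (mulVmx V_unit); rewrite !mxE => <-.
  by apply: eq_bigr => k _; rewrite /c /V !mxE.
pose S := \sum_(i < r) B ^+ i * horner_qfpoly (\sum_k c k * x 0 i ^+ k).
have S1 : S = 1.
  rewrite /S; under eq_bigr => i _ do rewrite cE.
  rewrite (bigD1 i0) //= big1 ?addr0 ?rmorph1 ?expr0 ?mulr1 //.
  by move=> i i_neq0; rewrite eq_sym (negbTE i_neq0) rmorph0 mulr0.
have SE : S = \sum_(k < r) A ^+ k * (\sum_(i < r) B ^+ i) * horner_qfpoly (c k).
  rewrite /S; under eq_bigr => i _ do rewrite rmorph_sum mulr_sumr.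
  rewrite exchange_big /=; apply: eq_bigr => k _.
  rewrite mulr_sumr mulr_suml; apply: eq_bigr => i _.
  rewrite rmorphM rmorphXn !mxE rmorphXn /= horner_qfpoly_qX -exprM.
  by rewrite horner_qfpoly_commA mulrA exprA_mulBX mulnC.
apply/eqP => sumB0; move: (oner_eq0 'M[F]_n); rewrite -S1 SE.
by rewrite big1 ?eqxx // => k _; rewrite sumB0 mulr0 mul0r.
Qed.

End FullDegree.

Lemma sum_exprB_mulB : (\sum_(i < r) B ^+ i) * B = \sum_(i < r) B ^+ i.
Proof.
rewrite mulr_suml; case: r r_prime B_order => // r' _ B_order'.
rewrite big_ord_recr big_ord_recl /= -exprSr B_order' addrC; congr (_ + _).
by apply: eq_bigr => i _; rewrite -exprSr.
Qed.

Lemma dim_eq_degree_mxminpolyA : degree_mxminpoly A = r -> n = r.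
Proof.
move=> degA; apply/anti_leq; rewrite -{2}degA degree_mxminpoly_le /=.
pose T := \sum_(i < r) B ^+ i.
have [j Tj_neq0] : exists j, row j T != 0.
  apply/existsP; move: (sum_exprB_neq0 degA); apply: contraR.
  rewrite negb_exists => /forallP T0; apply/eqP/row_matrixP => i.
  by rewrite row0; apply/eqP; rewrite -[_ == 0]negbK T0.
set u := row j T.
have uB : u *m B = u by rewrite /u -row_mul mulmxE sum_exprB_mulB.
have krylovB : stablemx (krylov_mx A u) B.
  apply: stablemx_krylov => i; rewrite -mulmxA mulmxE exprA_mulB -mulmxE mulmxA uB.
  by have := krylov_horner_mx A u 'X^(i * q); rewrite rmorphXn /= horner_mx_X.
have /eqP <- := AB_irreducible (stablemx_krylov_self _ _) krylovB (krylov_mx_neq0 _ Tj_neq0).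
by rewrite -degA rank_leq_row.
Qed.

(* When [A] is scalar, [B] alone acts irreducibly, so its minimal polynomial is
   irreducible of degree [n]; it divides ['X^(q ^ r.-1) - 'X] by Fermat, unless
   [r] is the characteristic, where [B] is unipotent and so [B = 1]. *)
Section ScalarA.
Hypothesis A_scalar : is_scalar_mx A.

Lemma stablemx_scalarA m (U : 'M[F]_(m, n)) : stablemx U A.
Proof. by case/is_scalar_mxP: A_scalar => a ->; rewrite mul_mx_scalar scalemx_sub. Qed.

Lemma horner_mxB_ker_eq0 f : kermx (horner_mx B f) != 0 -> horner_mx B f = 0.
Proof.
move=> /(AB_irreducible (stablemx_scalarA _) (stablemx_ker_horner_mx _ _)).
by rewrite -sub1mx => /sub_kermxP; rewrite mul1mx.
Qed.

Lemma mxminpolyB_mi : monic_irreducible_poly (mxminpoly B).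
Proof. by split; [apply/mxminpoly_irreducible/horner_mxB_ker_eq0 | apply: mxminpoly_monic]. Qed.

Lemma degree_mxminpolyB : degree_mxminpoly B = n.
Proof.
apply/anti_leq; rewrite degree_mxminpoly_le /=.
have e0_neq0 : (delta_mx 0 0 : 'rV[F]_n) != 0.
  by apply/negP => /eqP/matrixP/(_ 0 0); rewrite !mxE /= => /eqP; rewrite oner_eq0.
have /eqP <- := AB_irreducible (stablemx_scalarA _) (stablemx_krylov_self _ _)
  (krylov_mx_neq0 B e0_neq0).
exact: rank_leq_row.
Qed.

Lemma dim_eq1_of_pchar : r \in [pchar F] -> n = 1%N.
Proof.
move=> r_pchar; have BsubX1 : horner_mx B ('X - 1) = 0.
  apply: horner_mxB_ker_eq0; rewrite kermx_eq0 row_free_unit; apply/negP => unitB1.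
  have pchar_poly_r : [pchar {poly F}].-nat r by rewrite pnatE // pchar_poly.
  have : horner_mx B (('X - 1) ^+ r) = 0.
    rewrite exprDn_pchar // exprNn_pchar // expr1n rmorphB rmorphXn /= horner_mx_X.
    by rewrite B_order rmorph1 subrr.
  by rewrite rmorphXn => BX1r; move: (unitrX r unitB1); rewrite BX1r unitr0.
have X1_neq0 : 'X - 1 != 0 :> {poly F} by rewrite -polyC1 polyXsubC_eq0.
have := dvdp_leq X1_neq0 (mxminpoly_min BsubX1).
rewrite -polyC1 size_XsubC size_mxminpoly ltnS -degree_mxminpolyB.
by have := mxminpoly_nonconstant B; case: (degree_mxminpoly B) => [|[|]].
Qed.

Lemma expB_card_pred : r \notin [pchar F] -> B ^+ (q ^ r.-1) = B.
Proof.
move=> r_pchar'; have q_coprime_r : coprime q r.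
  by apply: (pnat_coprime (pchar_nat_card F)); rewrite pnatE // inE.
have qr1 : (q ^ r.-1 %% r = 1)%N.
  have := Euler_exp_totient q_coprime_r; rewrite totient_prime // => ->.
  by rewrite modn_small // prime_gt1.
by rewrite (divn_eq (q ^ r.-1) r) qr1 exprD mulnC exprM B_order expr1n mul1r expr1.
Qed.

Lemma dim_dvdn_of_scalarA : (n %| r.-1)%N.
Proof.
have [/dim_eq1_of_pchar -> // | /expB_card_pred B_fixed] := boolP (r \in [pchar F]).
have := deg_irr_dvdn mxminpolyB_mi (m := r.-1); rewrite size_mxminpoly degree_mxminpolyB.
apply; apply: mxminpoly_min.
by rewrite rmorphB rmorphXn /= horner_mx_X B_fixed subrr.
Qed.

End ScalarA.

Lemma dim_semilinear_pair : n = r \/ (is_scalar_mx A /\ (n %| r.-1)%N).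
Proof.
case/primeP: r_prime => _ /(_ _ degree_mxminpolyA_dvd) /orP [/eqP degA1 | /eqP degA].
  have scalarA : is_scalar_mx A by rewrite -mxminpoly_linear_is_scalar degA1.
  by right; split; last exact: dim_dvdn_of_scalarA.
by left; apply: dim_eq_degree_mxminpolyA.
Qed.

End SemilinearPair.

Lemma exprD1_sqr0 (R : pzRingType) (N : R) m : N * N = 0 -> (1 + N) ^+ m = 1 + N *+ m.
Proof.
move=> NN0; elim: m => [|m IH]; first by rewrite expr0 mulr0n addr0.
rewrite exprSr IH mulrDl mul1r mulrDr mulr1 mulrnAl NN0 mul0rn addr0.
by rewrite mulrS addrA.
Qed.

Section UnipotentKernel.
Variables (gT : finGroupType) (G : {group gT}) (F : finFieldType) (p : nat).
Hypothesis pcharFp : p \in [pchar F].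

Lemma expp_rker_of_submod_factmod n (rG : mx_representation F G n.+1) (U : 'M_n.+1)
    (modU : mxmodule rG U) y :
  y \in rstab rG U -> y \in rker (factmod_repr modU) -> (y ^+ p)%g \in rker rG.
Proof.
rewrite inE => /andP [yG /eqP UY] /rkerP [_ factY].
set Y := rG y.
have Y1_subU : (Y - 1%:M <= U)%MS.
  rewrite -in_factmod_eq0 linearB /=.
  have := in_factmodJ modU 1%:M yG; rewrite mul1mx.
  by move: factY; rewrite /= => ->; rewrite mulmx1 => ->; rewrite subrr.
have UY1 : U *m (Y - 1%:M) = 0 by rewrite mulmxBr UY mulmx1 subrr.
have Y1_sqr0 : (Y - 1%:M) * (Y - 1%:M) = 0.
  by case/submxP: Y1_subU => X XU; rewrite {1}XU -mulmxE -mulmxA UY1 mulmx0.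
apply/rkerP; split; first by rewrite groupX.
rewrite (repr_mxX rG _ yG) -/Y -[Y](subrK 1%:M) addrC exprD1_sqr0 //.
by rewrite -scaler_nat (pcharf0 pcharFp) scale0r addr0.
Qed.

(* Contrapositive of: if [z] acts trivially on every composition factor of an
   [n]-dimensional module, then [z ^+ (p ^ n)] acts trivially on it, by induction
   on a composition series. *)
Lemma exists_irr_repr_nontrivial z : z \in G ->
  forall n (rG : mx_representation F G n), (z ^+ (p ^ n))%g \notin rker rG ->
  exists m (rG' : mx_representation F G m), mx_irreducible rG' /\ rG' z != 1%:M.
Proof.
move=> zG; elim/ltn_ind => -[|n'] IH rG z_notin.
  by case/negP: z_notin; apply/rkerP; split; [rewrite groupX | rewrite !flatmx0].
have [|no_submod] := boolP [exists U : 'M_n'.+1, [&& mxmodule rG U, U != 0 & ~~ row_full U]].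
  case/existsP => U /and3P [modU U_neq0 U_nfull].
  have rankU_gt0 : (0 < \rank U)%N by rewrite lt0n mxrank_eq0.
  have rankU_le : (\rank U <= n')%N by rewrite -ltnS ltn_neqAle U_nfull rank_leq_col.
  have rank_coker_le : (\rank (cokermx U) <= n')%N.
    by rewrite mxrank_coker -ltnS ltn_subrL rankU_gt0.
  have expnD_subnKC k : (k <= n')%N -> (p ^ n' = p ^ k * p ^ (n' - k))%N.
    by move=> k_le; rewrite -expnD subnKC.
  have [zU_in | ] := boolP ((z ^+ (p ^ \rank U))%g \in rker (submod_repr modU)); last first.
    exact: IH.
  have [zfact_in | ] :=
    boolP ((z ^+ (p ^ \rank (cokermx U)))%g \in rker (factmod_repr modU)); last first.
    exact: IH.
  rewrite rker_submod in zU_in.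
  case/negP: z_notin.
  have -> : (z ^+ (p ^ n'.+1) = (z ^+ (p ^ n')) ^+ p)%g by rewrite expnSr expgM.
  apply: (expp_rker_of_submod_factmod (modU := modU)).
    by rewrite (expnD_subnKC _ rankU_le) expgM groupX.
  by rewrite (expnD_subnKC _ rank_coker_le) expgM groupX.
have rG_irr : mx_irreducible rG.
  apply/mx_irrP; split => // U modU U_neq0; apply: contraNT no_submod => U_nfull.
  by apply/existsP; exists U; rewrite modU U_neq0.
exists n'.+1, rG; split => //; apply: contraNneq z_notin => rGz.
by apply: groupX; apply/rkerP.
Qed.

End UnipotentKernel.

Section GammaL1Representations.
Variables (q r : nat) (F E : finFieldType) (G : {group {perm E}}).
Hypotheses (r_prime : prime r) (cardF : #|F| = q) (cardE : #|E| = (q ^ r)%N)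
  (defG : G :=: GammaL1 E q r).

Lemma expf_cardE (x : E) : x ^+ (q ^ r) = x.
Proof. by rewrite -cardE expf_card. Qed.

Lemma frobeniusE_inj : injective (fun x : E => x ^+ q).
Proof.
move=> x y /= xy_q.
by rewrite -(expf_cardE x) -(expf_cardE y) -(prednK (prime_gt0 r_prime)) expnS !exprM xy_q.
Qed.

Definition frobeniusE : {perm E} := perm frobeniusE_inj.

Lemma unitE_cyclic_gen : exists x : {unit E}, [set: {unit E}] == <[x]>%g.
Proof.
have /cyclicP [x ->] := field_unit_group_cyclic [set: {unit E}]%G.
by exists x.
Qed.

Definition primitiveE : {unit E} := xchoose unitE_cyclic_gen.

Lemma primitiveE_gen : [set: {unit E}] = <[primitiveE]>%g.
Proof. exact/eqP/(xchooseP unitE_cyclic_gen). Qed.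

Lemma primitiveE_neq0 : val primitiveE != 0.
Proof. by rewrite -unitfE (valP primitiveE). Qed.

Definition mulE_primitive : {perm E} := perm (mulfI primitiveE_neq0).

Local Notation phi := frobeniusE.
Local Notation mu := mulE_primitive.

Lemma order_primitiveE : #[primitiveE]%g = (q ^ r).-1.
Proof. by rewrite orderE -primitiveE_gen cardsT -cardE -card_finField_unit cardsT. Qed.

Lemma frobeniusEX i x : (phi ^+ i)%g x = x ^+ (q ^ i).
Proof.
rewrite permX; elim: i => [|i IH]; first by rewrite expr1.
by rewrite iterS IH permE /= -exprM expnSr.
Qed.

Lemma mulE_primitiveX j x : (mu ^+ j)%g x = val primitiveE ^+ j * x.
Proof.
rewrite permX; elim: j => [|j IH]; first by rewrite expr0 mul1r.
by rewrite iterS IH permE /= mulrA -exprS.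
Qed.

Lemma mulE_primitive_in : mu \in G.
Proof.
rewrite defG inE; apply/existsP; exists (val primitiveE).
apply/existsP; exists (Ordinal (prime_gt0 r_prime)).
by rewrite primitiveE_neq0; apply/forallP => x; rewrite permE expn0 expr1.
Qed.

Lemma frobeniusE_in : phi \in G.
Proof.
rewrite defG inE; apply/existsP; exists 1; apply/existsP; exists (Ordinal (prime_gt1 r_prime)).
by rewrite oner_eq0; apply/forallP => x; rewrite permE expn1 mul1r.
Qed.

Lemma GammaL1_generated s : s \in G -> exists i j, s = (phi ^+ i * mu ^+ j)%g.
Proof.
rewrite defG inE => /existsP [l /existsP [i /andP [l_neq0 /forallP sE]]].
have l_unit : l \is a GRing.unit by rewrite unitfE.
have : (Sub l l_unit : {unit E}) \in <[primitiveE]>%g by rewrite -primitiveE_gen inE.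
case/cycleP => j lE; exists i, j; apply/permP => x.
rewrite permM frobeniusEX mulE_primitiveX (eqP (sE x)); congr (_ * _).
by rewrite -FinRing.val_unitX -lE.
Qed.

Lemma mulE_primitive_fixed : (mu ^+ (q ^ r))%g = mu.
Proof. by apply/permP => x; rewrite mulE_primitiveX permE expf_cardE. Qed.

Lemma frobeniusE_order : (phi ^+ r)%g = 1%g.
Proof. by apply/permP => x; rewrite frobeniusEX perm1 expf_cardE. Qed.

Lemma mulE_primitive_frobenius : (mu * phi = phi * mu ^+ q)%g.
Proof. by apply/permP => x; rewrite !permM mulE_primitiveX !permE /= exprMn. Qed.

Lemma dim_irr_GammaL1 n (rG : mx_representation F G n.+1) : mx_irreducible rG ->
  n.+1 = r \/ (is_scalar_mx (rG mu) /\ (n.+1 %| r.-1)%N).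
Proof.
case/mx_irrP => _ rG_irr; have [muG phiG] := (mulE_primitive_in, frobeniusE_in).
apply: (dim_semilinear_pair (B := rG phi)) => //.
- by rewrite cardF -(repr_mxX rG _ muG) mulE_primitive_fixed.
- by rewrite -(repr_mxX rG _ phiG) frobeniusE_order repr_mx1.
- rewrite cardF -repr_mxMr // mulE_primitive_frobenius repr_mxMr ?groupX //.
  by rewrite (repr_mxX rG _ muG).
move=> m U stable_mu stable_phi U_neq0.
have stableX (M : 'M_n.+1) e : stablemx U M -> stablemx U (M ^+ e).
  by move=> stableM; elim: e => [|e IH]; rewrite ?expr0 ?mulmx1 // exprSr stablemxM.
have modU : mxmodule rG <<U>>%MS.
  apply/mxmoduleP => x /GammaL1_generated [i [j ->]].
  rewrite repr_mxM ?groupX // !(repr_mxX rG) // !genmxE mulmxA.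
  by rewrite -mulmxA (eqmxMr _ (genmxE U)) stablemxM ?stableX.
have := rG_irr _ modU; rewrite -mxrank_eq0 genmxE mxrank_eq0 => /(_ U_neq0).
by rewrite /row_full genmxE.
Qed.

Lemma q_gt1 : (1 < q)%N.
Proof. by rewrite -cardF finNzRing_gt1. Qed.

Section Existence.
Variable p : nat.
Hypotheses (pcharFp : p \in [pchar F]) (p_dvd_q : (p %| q)%N).

Lemma expp_mulE_primitive_notin_rker t :
  ((mu ^+ q.-1) ^+ (p ^ t))%g \notin rker (regular_repr F G).
Proof.
have qr_gt_q : (q < q ^ r)%N by rewrite -[X in (X < _)%N]expn1 ltn_exp2l ?q_gt1 ?prime_gt1.
apply/negP => /(subsetP (regular_mx_faithful F G)); rewrite inE => /eqP.
rewrite -expgnA => /(congr1 (fun s : {perm E} => s 1)).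
rewrite mulE_primitiveX perm1 mulr1 => mu_1.
have : (primitiveE ^+ (q.-1 * p ^ t) == 1)%g.
  by apply/eqP/val_inj; rewrite FinRing.val_unitX.
rewrite -order_dvdn order_primitiveE Gauss_dvdl; last first.
  apply/coprimeXr/(coprime_dvdr (dvdn_exp (prime_gt0 r_prime) p_dvd_q)).
  by rewrite -{2}(prednK (ltnW (ltn_trans q_gt1 qr_gt_q))) coprimenS.
by move=> /dvdn_leq; have := q_gt1; lia.
Qed.

Lemma exists_irr_GammaL1_dim : exists rG : mx_representation F G r, mx_irreducible rG.
Proof.
have muG := mulE_primitive_in.
have [m [rG [rG_irr rGz]]] := exists_irr_repr_nontrivial pcharFp (groupX q.-1 muG)
  (expp_mulE_primitive_notin_rker #|G|).
case: m rG rG_irr rGz => [|m] rG rG_irr rGz; first by case/mx_irrP: rG_irr.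
have [mr | [/is_scalar_mxP [a rG_mu] _]] := dim_irr_GammaL1 rG_irr.
  by rewrite -mr; exists rG.
have a_neq0 : a != 0.
  apply/eqP => a0; have := repr_mx_unit rG muG.
  by rewrite rG_mu a0 -scalemx1 scale0r unitr0.
have a_q1 : a ^+ q.-1 = 1.
  apply: (mulfI a_neq0); rewrite mulr1 -exprS prednK ?(ltnW q_gt1) //.
  by rewrite -cardF expf_card.
by case/negP: rGz; rewrite (repr_mxX rG _ muG) rG_mu -rmorphXn /= a_q1.
Qed.

End Existence.
End GammaL1Representations.

Close Scope ring_scope.
Unset Implicit Arguments.

Theorem mainTheorem11
  (p k r q : nat) (Hp : prime p) (Hk : 0 < k) (Hq : q = p ^ k) (Hr : prime r)
  (F E : finFieldType) (HF : #|F| = q) (HE : #|E| = q ^ r)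
  (G : {group {perm E}}) (HG : G :=: GammaL1 E q r) :
  (forall (n : nat) (rG : mx_representation F G n),
      mx_irreducible rG -> n = r \/ n %| r.-1)
  /\ (exists (n : nat) (rG : mx_representation F G n),
      mx_irreducible rG /\ n = r).
Proof.
split=> [[|n] rG rG_irr | ]; first by case/mx_irrP: rG_irr.
  by case: (dim_irr_GammaL1 Hr HF HE HG rG_irr) => [|[_]]; [left | right].
have pcharFp : p \in [pchar F]%R by apply: (@card_finPcharP _ _ k); rewrite ?HF.
have p_dvd_q : p %| q by rewrite Hq dvdn_exp.
have [rG rG_irr] := exists_irr_GammaL1_dim Hr HF HE HG pcharFp p_dvd_q.
by exists r, rG.
Qed.
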